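(* Let $f:\mathbb{N}^d\to\mathbb{N}$ be obliviously-computable by a leaderless CRN. Then $f$ is superadditive: $f(\vec{x})+f(\vec{y})\le f(\vec{x}+\vec{y})$ for all $\vec{x},\vec{y}\in\mathbb{N}^d$.
   Context: A chemical reaction network (CRN) is a pair $(\mathcal{S},\mathcal{R})$ of a finite set of species and a finite set of reactions $(\vec{R},\vec{P})\in\mathbb{N}^{\mathcal{S}}\times\mathbb{N}^{\mathcal{S}}$. A configuration is $\vec{C}\in\mathbb{N}^{\mathcal{S}}$; a reaction is applicable if $\vec{R}\le\vec{C}$ and yields $\vec{C}-\vec{R}+\vec{P}$; reachability is via finite sequences of applicable reactions. A leaderless CRN computing $f:\mathbb{N}^d\to\mathbb{N}$ has input species $X_1,\ldots,X_d$ and output species $Y$; the initial configuration $\vec{I}_{\vec{x}}$ has $\vec{x}(i)$ copies of $X_i$ and zero of all other species. $\vec{C}$ is stable if all configurations reachable from it have the same count of $Y$. The CRN stably computes $f$ if for every $\vec{x}$ and every $\vec{C}$ reachable from $\vec{I}_{\vec{x}}$ some stable $\vec{O}$ reachable from $\vec{C}$ has $\vec{O}(Y)=f(\vec{x})$. It is output-oblivious if $Y$ is never a reactant. $f$ is obliviously-computable by a leaderless CRN if a leaderless output-oblivious CRN stably computes it. *)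

From mathcomp Require Import all_boot.
Set Implicit Arguments. Unset Strict Implicit. Unset Printing Implicit Defensive.

Section CRN.
Variable S : finType.

Definition config := {ffun S -> nat}.

(* a reaction is a pair (R, P) of reactant and product vectors *)
Definition reaction := (config * config)%type.

Definition applicable (r : reaction) (C : config) : Prop :=
  forall s, r.1 s <= C s.

Definition apply_reaction (r : reaction) (C : config) : config :=
  [ffun s => C s - r.1 s + r.2 s].

Definition step (rs : seq reaction) (C D : config) : Prop :=
  exists2 r, r \in rs & applicable r C /\ D = apply_reaction r C.

Inductive reachable (rs : seq reaction) : config -> config -> Prop :=
  | reach_refl C : reachable rs C C
  | reach_step C D E : step rs C D -> reachable rs D E -> reachable rs C E.

Definition stable (rs : seq reaction) (Y : S) (C : config) : Prop :=
  forall D, reachable rs C D -> D Y = C Y.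

Definition init_config (d : nat) (X : 'I_d -> S) (x : 'I_d -> nat) : config :=
  [ffun s => \sum_(i < d | X i == s) x i].

Definition stably_computes (d : nat) (rs : seq reaction) (X : 'I_d -> S) (Y : S)
    (f : ('I_d -> nat) -> nat) : Prop :=
  forall x C, reachable rs (init_config X x) C ->
    exists O, [/\ reachable rs C O, stable rs Y O & O Y = f x].

Definition output_oblivious (rs : seq reaction) (Y : S) : Prop :=
  forall r, r \in rs -> r.1 Y = 0.

End CRN.

Definition obliviously_computable (d : nat) (f : ('I_d -> nat) -> nat) : Prop :=
  exists (S : finType) (rs : seq (reaction S)) (X : 'I_d -> S) (Y : S),
    [/\ injective X, (forall i, X i != Y), output_oblivious rs Y
      & stably_computes rs X Y f].

(* Run the computations from I_x and I_y side by side inside I_(x+y): a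
   reaction applicable to a configuration stays applicable when molecules are
   added, so O_x + O_y is reachable from I_(x+y), where O_x and O_y are stable
   outputs for x and y.  From O_x + O_y the CRN still reaches an output
   configuration with f(x+y) copies of Y, and since Y is never a reactant its
   count can only grow along the way. *)
From mathcomp Require Import all_boot zify.
Set Implicit Arguments. Unset Strict Implicit.

Section Reachability.
Variables (S : finType) (rs : seq (reaction S)).

Definition config_add (C D : config S) : config S := [ffun s => C s + D s].

Lemma config_addC C D : config_add C D = config_add D C.
Proof. by apply/ffunP=> s; rewrite !ffunE addnC. Qed.

Lemma reachable_trans C D E :
  reachable rs C D -> reachable rs D E -> reachable rs C E.
Proof. by elim=> // C1 D1 E1 stepCD _ IH /IH; apply: reach_step. Qed.

Lemma reachable_addr E C D :
  reachable rs C D -> reachable rs (config_add C E) (config_add D E).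
Proof.
elim=> [C1 | C1 D1 E1 [r r_in [app_r ->]] _ IH]; first exact: reach_refl.
apply: reach_step IH; exists r => //; split.
- by move=> s; rewrite ffunE; have := app_r s; lia.
- by apply/ffunP=> s; rewrite !ffunE; have := app_r s; lia.
Qed.

Lemma reachable_add C1 D1 C2 D2 :
  reachable rs C1 D1 -> reachable rs C2 D2 ->
  reachable rs (config_add C1 C2) (config_add D1 D2).
Proof.
move=> reach1 /(reachable_addr D1); rewrite !(config_addC _ D1) => reach2.
exact: reachable_trans (reachable_addr C2 reach1) reach2.
Qed.

Lemma output_oblivious_reachable_le Y C D :
  output_oblivious rs Y -> reachable rs C D -> C Y <= D Y.
Proof.
move=> oblivious; elim=> // C1 D1 E1 [r r_in [_ ->]] _.
by apply: leq_trans; rewrite ffunE (oblivious r r_in); lia.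
Qed.

End Reachability.

Lemma init_config_add (S : finType) d (X : 'I_d -> S) x y :
  init_config X (fun i => x i + y i) =
  config_add (init_config X x) (init_config X y).
Proof. by apply/ffunP=> s; rewrite !ffunE big_split. Qed.

Theorem mainTheorem6 (d : nat) (f : ('I_d -> nat) -> nat) :
  obliviously_computable f ->
  forall x y : 'I_d -> nat, f x + f y <= f (fun i => x i + y i).
Proof.
move=> [S [rs [X [Y [_ _ oblivious computes]]]]] x y.
have [Ox [reach_x _ <-]] := computes x _ (reach_refl _ _).
have [Oy [reach_y _ <-]] := computes y _ (reach_refl _ _).
have reach_xy : reachable rs (init_config X (fun i => x i + y i)) (config_add Ox Oy).
  by rewrite init_config_add; apply: reachable_add.
have [O [reach_O _ <-]] := computes _ _ reach_xy.
by have := output_oblivious_reachable_le oblivious reach_O; rewrite ffunE.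
Qed.
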